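(* Let $G_0$ and $A_0$ be bounded selfadjoint operators in $\mathcal H$ with $G_0A_0G_0\ge0$, and let $[x,y]:=(G_0x,y)$. Then the bounded $G_0$-symmetric operator $A_0G_0$ satisfies: (i) $\sigma(A_0G_0)\subset\mathbb R$; (ii) $(0,\infty)\cap\sigma(A_0G_0)\subset\sigma_{++}(A_0G_0)$; (iii) $(-\infty,0)\cap\sigma(A_0G_0)\subset\sigma_{--}(A_0G_0)$.
   Context: $(\mathcal H,(\cdot,\cdot))$ complex Hilbert space. $\sigma(S)$ is the spectrum; $\sigma_{ap}(S)$ is the set of $\lambda$ with a sequence $(x_n)$, $\|x_n\|=1$, $(S-\lambda)x_n\to0$. For an operator $T$ symmetric w.r.t. $[\cdot,\cdot]$, $\sigma_{++}(T)$ ($\sigma_{--}(T)$) is the set of $\lambda\in\sigma_{ap}(T)$ such that every $(x_n)\subset\operatorname{dom}T$ with $\|x_n\|=1$, $(T-\lambda)x_n\to0$ satisfies $\liminf_n[x_n,x_n]>0$ (resp. $\limsup_n[x_n,x_n]<0$). *)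

From Stdlib Require Import Reals Lra.
Open Scope R_scope.

Record Cplx : Type := mkC { Re : R ; Im : R }.
Definition RtoC (r : R) : Cplx := mkC r 0.
Definition C0 : Cplx := mkC 0 0.
Definition C1 : Cplx := mkC 1 0.
Definition Cadd (z w : Cplx) : Cplx := mkC (Re z + Re w) (Im z + Im w).
Definition Cmul (z w : Cplx) : Cplx :=
  mkC (Re z * Re w - Im z * Im w) (Re z * Im w + Im z * Re w).
Definition Cconj (z : Cplx) : Cplx := mkC (Re z) (- Im z).

Record HilbertSpace : Type := {
  carrier :> Type;
  vadd : carrier -> carrier -> carrier;
  vzero : carrier;
  vopp : carrier -> carrier;
  vscal : Cplx -> carrier -> carrier;
  inner : carrier -> carrier -> Cplx;
  vadd_assoc : forall x y z, vadd x (vadd y z) = vadd (vadd x y) z;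
  vadd_comm : forall x y, vadd x y = vadd y x;
  vadd_0 : forall x, vadd x vzero = x;
  vadd_opp : forall x, vadd x (vopp x) = vzero;
  vscal_1 : forall x, vscal C1 x = x;
  vscal_assoc : forall a b x, vscal a (vscal b x) = vscal (Cmul a b) x;
  vscal_distr_v : forall a x y, vscal a (vadd x y) = vadd (vscal a x) (vscal a y);
  vscal_distr_c : forall a b x, vscal (Cadd a b) x = vadd (vscal a x) (vscal b x);
  inner_add_l : forall x y z, inner (vadd x y) z = Cadd (inner x z) (inner y z);
  inner_scal_l : forall a x y, inner (vscal a x) y = Cmul a (inner x y);
  inner_conj : forall x y, inner y x = Cconj (inner x y);
  inner_pos : forall x, 0 <= Re (inner x x);
  inner_def : forall x, Re (inner x x) = 0 -> x = vzero;
  complete : forall u : nat -> carrier,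
    (forall eps, eps > 0 -> exists N : nat, forall m n : nat, (m >= N)%nat -> (n >= N)%nat ->
        sqrt (Re (inner (vadd (u m) (vopp (u n))) (vadd (u m) (vopp (u n))))) < eps) ->
    exists l : carrier, forall eps, eps > 0 -> exists N : nat, forall n : nat, (n >= N)%nat ->
        sqrt (Re (inner (vadd (u n) (vopp l)) (vadd (u n) (vopp l)))) < eps
}.

Arguments vadd {h}. Arguments vzero {h}. Arguments vopp {h}.
Arguments vscal {h}. Arguments inner {h}.

Section Ops.
Variable H : HilbertSpace.

Definition vsub (x y : H) : H := vadd x (vopp y).
Definition hnorm (x : H) : R := sqrt (Re (inner x x)).

Definition linear_op (T : H -> H) : Prop :=
  (forall x y, T (vadd x y) = vadd (T x) (T y)) /\
  (forall a x, T (vscal a x) = vscal a (T x)).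
Definition bounded_op (T : H -> H) : Prop :=
  linear_op T /\ exists M : R, forall x, hnorm (T x) <= M * hnorm x.
Definition selfadjoint (T : H -> H) : Prop :=
  bounded_op T /\ forall x y, inner (T x) y = inner x (T y).
Definition nonneg_op (T : H -> H) : Prop :=
  forall x, Im (inner (T x) x) = 0 /\ 0 <= Re (inner (T x) x).

Definition Gsymmetric (G T : H -> H) : Prop :=
  forall x y, inner (G (T x)) y = inner (G x) (T y).

Definition spectrum (S : H -> H) (lam : Cplx) : Prop :=
  ~ (exists B : H -> H, bounded_op B /\
       (forall x, B (vsub (S x) (vscal lam x)) = x) /\
       (forall x, vsub (S (B x)) (vscal lam (B x)) = x)).

Definition approx_seq (S : H -> H) (lam : Cplx) (x : nat -> H) : Prop :=
  (forall n, hnorm (x n) = 1) /\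
  Un_cv (fun n => hnorm (vsub (S (x n)) (vscal lam (x n)))) 0.
Definition sigma_ap (S : H -> H) (lam : Cplx) : Prop :=
  exists x, approx_seq S lam x.

(* sigma_{++} and sigma_{--} w.r.t. [x,y] = (G x, y);
   liminf_n [x_n,x_n] > 0  is unfolded as  exists eps>0, eventually [x_n,x_n] >= eps
   (and dually for limsup < 0). *)
Definition sigma_pp (G T : H -> H) (lam : Cplx) : Prop :=
  sigma_ap T lam /\
  forall x, approx_seq T lam x ->
    exists eps, eps > 0 /\ exists N : nat, forall n : nat, (n >= N)%nat ->
      Re (inner (G (x n)) (x n)) >= eps.
Definition sigma_mm (G T : H -> H) (lam : Cplx) : Prop :=
  sigma_ap T lam /\
  forall x, approx_seq T lam x ->
    exists eps, eps > 0 /\ exists N : nat, forall n : nat, (n >= N)%nat ->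
      Re (inner (G (x n)) (x n)) <= - eps.

End Ops.

(* Write T = A0 G0 and P = G0 A0 G0 >= 0.  For lam <> 0 put S_lam = T - lam.
   Three elementary estimates drive everything:
   - |lam|^2 |x| <= a |P x| + (a c + |lam|) |S_lam x|   (a, c bound A0, G0);
   - |P x|^2 <= |P| (P x, x)                              (P is nonnegative);
   - (P x, x) = (G0 S_lam x, x) + lam [x,x], with (P x, x) and [x,x] real.
   The first two show that (P x, x) is bounded away from 0 on unit vectors
   with |S_lam x| small.  For nonreal lam the third identity then forces
   |S_lam x| to be bounded below; for real lam it forces lam [x,x] to be
   bounded away from 0 along approximate eigensequences, which gives
   sigma_{++} and sigma_{--}.  Invertibility of S_lam is deduced from a
   general fact: a bounded operator S which, together with its adjoint S',
   is bounded below is invertible (surjectivity of S S' comes from the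
   Banach fixed point theorem applied to the contraction I - beta S S').  The adjoint
   of S_lam is G0 A0 - conj lam, which is bounded below as soon as
   S_{conj lam} is, because A0 intertwines the two operators. *)

From Stdlib Require Import Reals Lra Lia Psatz Classical IndefiniteDescription.
Open Scope R_scope.

Arguments vadd_assoc {h}. Arguments vadd_comm {h}. Arguments vadd_0 {h}.
Arguments vadd_opp {h}. Arguments vscal_1 {h}. Arguments vscal_assoc {h}.
Arguments vscal_distr_v {h}. Arguments vscal_distr_c {h}.
Arguments inner_add_l {h}. Arguments inner_scal_l {h}. Arguments inner_conj {h}.
Arguments inner_pos {h}. Arguments inner_def {h}. Arguments complete {h}.
Arguments vsub {H}. Arguments hnorm {H}.

Lemma Ceq : forall z w : Cplx, Re z = Re w -> Im z = Im w -> z = w.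
Proof. intros [a b] [c d]; simpl; intros; subst; reflexivity. Qed.

Definition Cabs (a : Cplx) : R := sqrt (Re a * Re a + Im a * Im a).

Lemma Cabs_pos : forall a, 0 <= Cabs a.
Proof. intros; apply sqrt_pos. Qed.

Lemma Cabs_RtoC : forall r, Cabs (RtoC r) = Rabs r.
Proof.
  intros. unfold Cabs, RtoC; simpl. rewrite <- sqrt_Rsqr_abs. unfold Rsqr. f_equal. ring.
Qed.

Lemma Cabs_conj : forall a, Cabs (Cconj a) = Cabs a.
Proof. intros. unfold Cabs; simpl. f_equal. ring. Qed.

Lemma Cabs_pos_nonreal : forall lam, Im lam <> 0 -> 0 < Cabs lam.
Proof.
  intros lam h. unfold Cabs. apply sqrt_lt_R0.
  assert (0 < Im lam * Im lam) by (apply Rsqr_pos_lt; auto). nra.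
Qed.

Lemma Cconj_RtoC : forall r, Cconj (RtoC r) = RtoC r.
Proof. intros. apply Ceq; simpl; lra. Qed.

Section Hilbert.
Variable H : HilbertSpace.

Lemma vadd_0l : forall x : H, vadd vzero x = x.
Proof. intros; rewrite vadd_comm; apply vadd_0. Qed.

Lemma vadd_opp_l : forall x : H, vadd (vopp x) x = vzero.
Proof. intros; rewrite vadd_comm; apply vadd_opp. Qed.

Lemma vadd_cancel_r : forall u v w : H, vadd u w = vadd v w -> u = v.
Proof.
  intros u v w E.
  assert (E2 : vadd (vadd u w) (vopp w) = vadd (vadd v w) (vopp w)) by (rewrite E; reflexivity).
  rewrite <- !vadd_assoc, vadd_opp, !vadd_0 in E2. exact E2.
Qed.

Lemma vadd_cancel_l : forall u v w : H, vadd w u = vadd w v -> u = v.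
Proof.
  intros u v w E. apply (vadd_cancel_r u v w). rewrite (vadd_comm u), (vadd_comm v); exact E.
Qed.

Lemma idem_zero : forall u : H, vadd u u = u -> u = vzero.
Proof. intros u E. apply (vadd_cancel_r u vzero u). rewrite vadd_0l; exact E. Qed.

Lemma opp_unique : forall a b : H, vadd a b = vzero -> b = vopp a.
Proof. intros a b E. apply (vadd_cancel_l b (vopp a) a). rewrite vadd_opp; exact E. Qed.

Lemma vadd_swap : forall a b c d : H, vadd (vadd a b) (vadd c d) = vadd (vadd a c) (vadd b d).
Proof.
  intros. rewrite <- !vadd_assoc. f_equal. rewrite !vadd_assoc. f_equal. apply vadd_comm.
Qed.

Lemma vopp_add : forall a b : H, vopp (vadd a b) = vadd (vopp a) (vopp b).
Proof.
  intros. symmetry. apply opp_unique. rewrite vadd_swap, !vadd_opp, vadd_0. reflexivity.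
Qed.

Lemma vsub_add : forall a b : H, vadd (vsub a b) b = a.
Proof. intros. unfold vsub. rewrite <- vadd_assoc, vadd_opp_l, vadd_0. reflexivity. Qed.

Lemma vsub_eq0 : forall a b : H, vsub a b = vzero -> a = b.
Proof. intros a b E. rewrite <- (vsub_add a b), E, vadd_0l. reflexivity. Qed.

Lemma vsub_vv : forall a : H, vsub a a = vzero.
Proof. intros; apply vadd_opp. Qed.

Lemma vsub_sym_opp : forall a b : H, vsub b a = vopp (vsub a b).
Proof.
  intros. apply opp_unique. unfold vsub.
  rewrite (vadd_comm b), vadd_swap, vadd_opp, vadd_opp_l, vadd_0. reflexivity.
Qed.

Lemma vsub_chain : forall a b c : H, vsub a c = vadd (vsub a b) (vsub b c).
Proof.
  intros. unfold vsub. rewrite vadd_assoc. f_equal.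
  rewrite <- vadd_assoc, vadd_opp_l, vadd_0. reflexivity.
Qed.

Lemma vsub_addc : forall p q c : H, vsub (vadd p c) (vadd q c) = vsub p q.
Proof.
  intros. unfold vsub. rewrite vopp_add, vadd_swap, vadd_opp, vadd_0. reflexivity.
Qed.

Lemma vscal_zero : forall (a : Cplx) (x : H), Re a = 0 -> Im a = 0 -> vscal a x = vzero.
Proof.
  intros a x h1 h2. apply idem_zero. rewrite <- vscal_distr_c. f_equal. apply Ceq; simpl; lra.
Qed.

Lemma vopp_scal : forall a (x : H), vopp (vscal a x) = vscal (mkC (- Re a) (- Im a)) x.
Proof.
  intros. symmetry. apply opp_unique. rewrite <- vscal_distr_c. apply vscal_zero; simpl; lra.
Qed.

Lemma lin_zero : forall L : H -> H, linear_op H L -> L vzero = vzero.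
Proof. intros L [h1 h2]. apply idem_zero. rewrite <- h1, vadd_0. reflexivity. Qed.

Lemma lin_opp : forall L : H -> H, linear_op H L -> forall x, L (vopp x) = vopp (L x).
Proof.
  intros L hL x. apply opp_unique. rewrite <- (proj1 hL), vadd_opp. apply lin_zero; auto.
Qed.

Lemma lin_sub : forall L : H -> H, linear_op H L ->
  forall x y, L (vsub x y) = vsub (L x) (L y).
Proof. intros L hL x y. unfold vsub. rewrite (proj1 hL), lin_opp; auto. Qed.

Lemma lin_vscal : forall a, linear_op H (vscal a).
Proof.
  intros a. split.
  - intros; apply vscal_distr_v.
  - intros b x. rewrite !vscal_assoc. f_equal. apply Ceq; simpl; ring.
Qed.

Lemma lin_comp : forall L1 L2 : H -> H, linear_op H L1 -> linear_op H L2 ->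
  linear_op H (fun x => L1 (L2 x)).
Proof.
  intros L1 L2 [a1 b1] [a2 b2]. split; intros.
  - rewrite a2, a1; reflexivity.
  - rewrite b2, b1; reflexivity.
Qed.

Lemma lin_add : forall L1 L2 : H -> H, linear_op H L1 -> linear_op H L2 ->
  linear_op H (fun x => vadd (L1 x) (L2 x)).
Proof.
  intros L1 L2 [a1 b1] [a2 b2]. split; intros.
  - rewrite a1, a2. apply vadd_swap.
  - rewrite b1, b2, vscal_distr_v. reflexivity.
Qed.

Lemma lin_subf : forall L1 L2 : H -> H, linear_op H L1 -> linear_op H L2 ->
  linear_op H (fun x => vsub (L1 x) (L2 x)).
Proof.
  intros L1 L2 h1 [a2 b2]. unfold vsub. apply (lin_add L1 (fun x => vopp (L2 x))); auto.
  split; intros.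
  - rewrite a2, vopp_add; reflexivity.
  - rewrite b2. symmetry. apply lin_opp. apply lin_vscal.
Qed.

Lemma inner_add_r : forall x y z : H, inner x (vadd y z) = Cadd (inner x y) (inner x z).
Proof.
  intros. rewrite (inner_conj (vadd y z) x), inner_add_l, (inner_conj y x), (inner_conj z x).
  apply Ceq; simpl; ring.
Qed.

Lemma inner_scal_r : forall a (x y : H), inner x (vscal a y) = Cmul (Cconj a) (inner x y).
Proof.
  intros. rewrite (inner_conj (vscal a y) x), inner_scal_l, (inner_conj y x).
  apply Ceq; simpl; ring.
Qed.

Lemma inner_zero_l : forall y : H, inner vzero y = C0.
Proof.
  intros y. pose proof (inner_add_l (@vzero H) vzero y) as E. rewrite vadd_0 in E.
  destruct (inner vzero y) as [u v]. unfold Cadd in E; simpl in E. injection E; intros.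
  apply Ceq; simpl; lra.
Qed.

Lemma inner_zero_r : forall y : H, inner y vzero = C0.
Proof. intros. rewrite inner_conj, inner_zero_l. apply Ceq; simpl; lra. Qed.

Lemma inner_opp_l : forall x y : H,
  Re (inner (vopp x) y) = - Re (inner x y) /\ Im (inner (vopp x) y) = - Im (inner x y).
Proof.
  intros. pose proof (inner_add_l x (vopp x) y) as E. rewrite vadd_opp, inner_zero_l in E.
  split; [apply (f_equal Re) in E | apply (f_equal Im) in E]; simpl in E; lra.
Qed.

Lemma inner_sub_l : forall u w y : H,
  Re (inner (vsub u w) y) = Re (inner u y) - Re (inner w y) /\
  Im (inner (vsub u w) y) = Im (inner u y) - Im (inner w y).
Proof.
  intros. unfold vsub. rewrite inner_add_l. simpl.
  destruct (inner_opp_l w y) as [e1 e2]. rewrite e1, e2. split; ring.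
Qed.

Lemma inner_sub_r : forall u w y : H,
  Re (inner y (vsub u w)) = Re (inner y u) - Re (inner y w) /\
  Im (inner y (vsub u w)) = Im (inner y u) - Im (inner y w).
Proof.
  intros. rewrite !(inner_conj _ y). simpl.
  destruct (inner_sub_l u w y) as [e1 e2]. rewrite e1, e2. split; ring.
Qed.

Lemma Re_inner_sym : forall x y : H, Re (inner y x) = Re (inner x y).
Proof. intros. rewrite inner_conj. reflexivity. Qed.

Lemma Im_inner_self : forall x : H, Im (inner x x) = 0.
Proof. intros. pose proof (f_equal Im (inner_conj x x)). simpl in H0. lra. Qed.

Definition nsq (x : H) : R := Re (inner x x).

Lemma nsq_pos : forall x, 0 <= nsq x.
Proof. intros; apply inner_pos. Qed.

Lemma re_expand : forall (s : R) (u v u' v' : H),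
  Re (inner (vadd u (vscal (RtoC s) v)) (vadd u' (vscal (RtoC s) v'))) =
  Re (inner u u') + s * Re (inner u v') + s * Re (inner v u') + s * s * Re (inner v v').
Proof.
  intros. repeat (rewrite inner_add_l || rewrite inner_add_r
                  || rewrite inner_scal_l || rewrite inner_scal_r).
  simpl. ring.
Qed.

Lemma nsq_scal : forall a (x : H), nsq (vscal a x) = (Re a * Re a + Im a * Im a) * nsq x.
Proof.
  intros. unfold nsq. rewrite inner_scal_l, inner_scal_r. simpl. rewrite Im_inner_self. ring.
Qed.

Lemma CS_sq : forall x y : H, Re (inner x y) * Re (inner x y) <= nsq x * nsq y.
Proof.
  intros x y. destruct (Req_dec (nsq y) 0) as [h0|h0].
  - rewrite h0. apply inner_def in h0. subst y. rewrite inner_zero_r. simpl.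
    pose proof (nsq_pos x). lra.
  - assert (hy : 0 < nsq y) by (pose proof (nsq_pos y); lra).
    set (t := - Re (inner x y) / nsq y).
    pose proof (nsq_pos (vadd x (vscal (RtoC t) y))) as P. unfold nsq in P.
    rewrite re_expand in P. fold (nsq x) (nsq y) in P.
    rewrite (Re_inner_sym x y) in P.
    set (r := Re (inner x y)) in *.
    assert (E : t * nsq y = - r) by (unfold t; field; lra).
    assert (Q : 0 <= (nsq x + t * r + t * r + t * t * nsq y) * nsq y) by (apply Rmult_le_pos; lra).
    replace ((nsq x + t * r + t * r + t * t * nsq y) * nsq y) with
      (nsq x * nsq y + 2 * r * (t * nsq y) + (t * nsq y) * (t * nsq y)) in Q by ring.
    rewrite E in Q. lra.
Qed.

Lemma hn_pos : forall x : H, 0 <= hnorm x.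
Proof. intros; apply sqrt_pos. Qed.

Lemma hn_sq : forall x : H, hnorm x * hnorm x = nsq x.
Proof. intros; unfold hnorm; apply sqrt_sqrt; apply nsq_pos. Qed.

Lemma le_from_sq : forall (x : H) b, 0 <= b -> nsq x <= b * b -> hnorm x <= b.
Proof. intros. pose proof (hn_sq x). pose proof (hn_pos x). nra. Qed.

Lemma hn_zero : forall x : H, hnorm x = 0 -> x = vzero.
Proof. intros x h. apply inner_def. fold (nsq x). rewrite <- hn_sq, h. ring. Qed.

Lemma hn_vzero : hnorm (@vzero H) = 0.
Proof. unfold hnorm. rewrite inner_zero_l. simpl. apply sqrt_0. Qed.

Lemma CS_re : forall x y : H, Rabs (Re (inner x y)) <= hnorm x * hnorm y.
Proof.
  intros. pose proof (CS_sq x y) as E. rewrite <- !hn_sq in E.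
  rewrite <- (Rabs_pos_eq (hnorm x * hnorm y)) by (apply Rmult_le_pos; apply hn_pos).
  apply Rsqr_le_abs_0. unfold Rsqr. nra.
Qed.

Lemma hn_scal : forall a (x : H), hnorm (vscal a x) = Cabs a * hnorm x.
Proof.
  intros. unfold hnorm, Cabs. fold (nsq (vscal a x)) (nsq x). rewrite nsq_scal.
  apply sqrt_mult; [nra | apply nsq_pos].
Qed.

(* Cauchy-Schwarz for the imaginary part, by rotating y by i. *)
Lemma CS_im : forall x y : H, Rabs (Im (inner x y)) <= hnorm x * hnorm y.
Proof.
  intros. pose proof (CS_re x (vscal (mkC 0 1) y)) as E.
  rewrite inner_scal_r, hn_scal in E. unfold Cabs in E. simpl in E.
  replace (0 * Re (inner x y) - - (1) * Im (inner x y)) with (Im (inner x y)) in E by ring.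
  replace (0 * 0 + 1 * 1) with 1 in E by ring. rewrite sqrt_1 in E. lra.
Qed.

Lemma hn_tri : forall x y : H, hnorm (vadd x y) <= hnorm x + hnorm y.
Proof.
  intros. apply le_from_sq. pose proof (hn_pos x); pose proof (hn_pos y); lra.
  unfold nsq. rewrite inner_add_l, !inner_add_r. simpl.
  fold (nsq x) (nsq y). rewrite (Re_inner_sym x y).
  rewrite <- !hn_sq. pose proof (CS_re x y). pose proof (Rle_abs (Re (inner x y))). nra.
Qed.

Lemma hn_opp : forall x : H, hnorm (vopp x) = hnorm x.
Proof.
  intros. unfold hnorm. f_equal.
  rewrite (proj1 (inner_opp_l x (vopp x))), Re_inner_sym, (proj1 (inner_opp_l x x)). ring.
Qed.

Lemma hn_sub_sym : forall a b : H, hnorm (vsub a b) = hnorm (vsub b a).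
Proof. intros. rewrite (vsub_sym_opp a b), hn_opp. reflexivity. Qed.

Lemma hn_tri_sub : forall a b c : H, hnorm (vsub a c) <= hnorm (vsub a b) + hnorm (vsub b c).
Proof. intros. rewrite (vsub_chain a b c). apply hn_tri. Qed.

Lemma hn_tri2 : forall a b : H, hnorm a <= hnorm (vsub a b) + hnorm b.
Proof. intros. rewrite <- (vsub_add a b) at 1. apply hn_tri. Qed.

Lemma hn_sub_le : forall a b : H, hnorm (vsub a b) <= hnorm a + hnorm b.
Proof. intros. unfold vsub. rewrite <- (hn_opp b). apply hn_tri. Qed.

Lemma bnd_pos : forall L : H -> H, bounded_op H L ->
  exists M, 0 < M /\ forall x, hnorm (L x) <= M * hnorm x.
Proof.
  intros L [_ [M hM]]. exists (Rmax M 1). split.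
  - pose proof (Rmax_r M 1). lra.
  - intros x. eapply Rle_trans; [apply hM|].
    apply Rmult_le_compat_r; [apply hn_pos | apply Rmax_l].
Qed.

Definition bounded_below (S : H -> H) : Prop :=
  exists k, 0 < k /\ forall x, k * hnorm x <= hnorm (S x).

Lemma bounded_below_of_units (S : H -> H) (k : R) : linear_op H S -> 0 < k ->
  (forall x, hnorm x = 1 -> k <= hnorm (S x)) -> bounded_below S.
Proof.
  intros [_ hSs] hk hu. exists k. split; [exact hk|]. intros x.
  destruct (Req_dec (hnorm x) 0) as [e|e].
  - rewrite e, Rmult_0_r. apply hn_pos.
  - assert (hx : 0 < hnorm x) by (pose proof (hn_pos x); lra).
    assert (hs : Cabs (RtoC (/ hnorm x)) = / hnorm x).
    { rewrite Cabs_RtoC. apply Rabs_pos_eq. left; apply Rinv_0_lt_compat; exact hx. }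
    assert (hunit : hnorm (vscal (RtoC (/ hnorm x)) x) = 1) by (rewrite hn_scal, hs; field; lra).
    specialize (hu _ hunit). rewrite hSs, hn_scal, hs in hu.
    apply Rmult_le_reg_l with (/ hnorm x); [apply Rinv_0_lt_compat; exact hx|].
    replace (/ hnorm x * (k * hnorm x)) with k by (field; lra). exact hu.
Qed.

Lemma bounded_below_of_no_approx (S : H -> H) : linear_op H S ->
  ~ (exists x : nat -> H, (forall n, hnorm (x n) = 1) /\ Un_cv (fun n => hnorm (S (x n))) 0) ->
  bounded_below S.
Proof.
  intros hS hno. apply NNPP. intros hnb. apply hno.
  assert (hsmall : forall n : nat, exists x, hnorm x = 1 /\ hnorm (S x) < / (INR n + 1)).
  { intros n. apply NNPP. intros hn. apply hnb.
    apply (bounded_below_of_units S (/ (INR n + 1))); [exact hS| |].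
    - apply Rinv_0_lt_compat. pose proof (pos_INR n). lra.
    - intros x hx. apply Rnot_lt_le. intros hlt. apply hn. exists x. auto. }
  destruct (functional_choice _ hsmall) as [xs hxs].
  exists xs. split; [intros n; apply hxs|].
  intros eps heps. destruct (archimed_cor1 eps heps) as [N [hN hN0]].
  exists N. intros n hn. unfold R_dist. rewrite Rminus_0_r, Rabs_pos_eq by apply hn_pos.
  assert (/ (INR n + 1) <= / INR N).
  { apply Rinv_le_contravar; [apply lt_0_INR; lia|]. apply le_INR in hn. lra. }
  pose proof (proj2 (hxs n)). lra.
Qed.

Section BanachFixedPoint.
Variable F : H -> H.
Variable th : R.
Hypothesis th_nonneg : 0 <= th.
Hypothesis th_lt1 : th < 1.
Hypothesis F_contr : forall u w, hnorm (vsub (F u) (F w)) <= th * hnorm (vsub u w).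

Fixpoint picard (n : nat) : H := match n with O => vzero | S n' => F (picard n') end.

Let C := hnorm (vsub (picard 1) (picard 0)).

Lemma picard_step : forall n, hnorm (vsub (picard (S n)) (picard n)) <= th ^ n * C.
Proof.
  induction n.
  - simpl. unfold C. simpl. lra.
  - change (hnorm (vsub (F (picard (S n))) (F (picard n))) <= th ^ S n * C).
    eapply Rle_trans; [apply F_contr|].
    replace (th ^ S n * C) with (th * (th ^ n * C)) by (simpl; ring).
    apply Rmult_le_compat_l; lra.
Qed.

Lemma picard_gap : forall n j,
  (1 - th) * hnorm (vsub (picard (n + j)) (picard n)) <= C * th ^ n * (1 - th ^ j).
Proof.
  intros n j. induction j.
  - rewrite Nat.add_0_r, vsub_vv, hn_vzero. simpl. lra.
  - pose proof (hn_tri_sub (picard (n + S j)) (picard (n + j)) (picard n)) as T.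
    replace (n + S j)%nat with (S (n + j)) in * by lia.
    pose proof (picard_step (n + j)) as St. rewrite pow_add in St.
    assert (T2 : (1 - th) * hnorm (vsub (picard (S (n + j))) (picard n)) <=
                 (1 - th) * (th ^ n * th ^ j * C)
                 + (1 - th) * hnorm (vsub (picard (n + j)) (picard n))).
    { rewrite <- Rmult_plus_distr_l. apply Rmult_le_compat_l; lra. }
    rewrite <- tech_pow_Rmult. nra.
Qed.

Lemma picard_cauchy : forall n m, (n <= m)%nat ->
  hnorm (vsub (picard m) (picard n)) <= C * th ^ n / (1 - th).
Proof.
  intros n m hnm. replace m with (n + (m - n))%nat by lia.
  pose proof (picard_gap n (m - n)) as G.
  assert (0 <= th ^ (m - n)) by (apply pow_le; lra).
  assert (0 <= th ^ n) by (apply pow_le; lra).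
  assert (0 <= C) by apply hn_pos.
  apply Rmult_le_reg_l with (1 - th); [lra|].
  replace ((1 - th) * (C * th ^ n / (1 - th))) with (C * th ^ n) by (field; lra).
  assert (0 <= C * th ^ n * th ^ (m - n)) by (repeat apply Rmult_le_pos; lra).
  nra.
Qed.

Lemma picard_converges : exists l, forall eps, eps > 0 ->
  exists N : nat, forall n : nat, (n >= N)%nat -> hnorm (vsub (picard n) l) < eps.
Proof.
  apply (complete picard). intros eps heps. assert (0 <= C) by apply hn_pos.
  destruct (pow_lt_1_zero th ltac:(rewrite Rabs_pos_eq; lra) (eps * (1 - th) / (C + 1)))
    as [N hN].
  { apply Rdiv_lt_0_compat; nra. }
  exists N.
  assert (key : forall a b, (a >= N)%nat -> (a <= b)%nat ->
            hnorm (vsub (picard b) (picard a)) < eps).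
  { intros a b ha hab. eapply Rle_lt_trans; [apply picard_cauchy; exact hab|].
    specialize (hN a ha). rewrite Rabs_pos_eq in hN by (apply pow_le; lra).
    apply Rmult_lt_reg_l with (1 - th); [lra|].
    replace ((1 - th) * (C * th ^ a / (1 - th))) with (C * th ^ a) by (field; lra).
    apply Rmult_lt_compat_l with (r := C + 1) in hN; [|lra].
    replace ((C + 1) * (eps * (1 - th) / (C + 1))) with (eps * (1 - th)) in hN by (field; lra).
    assert (0 <= th ^ a) by (apply pow_le; lra). nra. }
  intros m n hm hn. change (hnorm (vsub (picard m) (picard n)) < eps).
  destruct (Nat.le_ge_cases n m).
  - apply key; auto.
  - rewrite hn_sub_sym. apply key; auto.
Qed.

Lemma contraction_fixed_point : exists l, F l = l.
Proof.
  destruct picard_converges as [l hl]. exists l.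
  apply vsub_eq0, hn_zero.
  assert (B : forall eps, eps > 0 -> hnorm (vsub (F l) l) <= 2 * eps).
  { intros eps he. destruct (hl eps he) as [N hN].
    pose proof (hn_tri_sub (F l) (F (picard N)) l) as T.
    pose proof (F_contr l (picard N)) as T2.
    change (F (picard N)) with (picard (S N)) in T, T2.
    pose proof (hN N (le_n N)). pose proof (hN (S N) ltac:(lia)).
    rewrite hn_sub_sym in H0. pose proof (hn_pos (vsub l (picard N))). nra. }
  pose proof (hn_pos (vsub (F l) l)).
  destruct (Req_dec (hnorm (vsub (F l) l)) 0); auto.
  specialize (B (hnorm (vsub (F l) l) / 4) ltac:(lra)). lra.
Qed.

End BanachFixedPoint.

Section AdjointPairInverse.
Variables S Sd : H -> H.
Hypothesis S_lin : linear_op H S.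
Hypothesis Sd_lin : linear_op H Sd.
Hypothesis S_adj : forall x y, inner (S x) y = inner x (Sd y).
Variable M : R.
Hypothesis M_pos : 0 < M.
Hypothesis S_bnd : forall x, hnorm (S x) <= M * hnorm x.
Hypothesis Sd_bnd : forall y, hnorm (Sd y) <= M * hnorm y.
Variable k' : R.
Hypothesis k'_pos : 0 < k'.
Hypothesis Sd_below : forall y, k' * hnorm y <= hnorm (Sd y).

Let m := k' * k'.
Let K := M * M.
Let beta := m / (K * K).
Let Lo (u : H) : H := vadd u (vscal (RtoC (- beta)) (S (Sd u))).

Lemma beta_pos : 0 < beta.
Proof.
  unfold beta, m, K. apply Rdiv_lt_0_compat; [nra|].
  apply Rmult_lt_0_compat; apply Rmult_lt_0_compat; lra.
Qed.

Lemma Lo_lin : linear_op H Lo.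
Proof.
  apply (lin_add (fun u => u) (fun u => vscal (RtoC (- beta)) (S (Sd u)))).
  - split; reflexivity.
  - apply (lin_comp (vscal _)); [apply lin_vscal | apply lin_comp; auto].
Qed.

Lemma Lo_contr_sq : forall u, nsq (Lo u) <= (1 - m * m / (K * K)) * nsq u.
Proof.
  intros u. unfold nsq, Lo. rewrite re_expand.
  assert (R1 : Re (inner (S (Sd u)) u) = nsq (Sd u)) by (rewrite S_adj; reflexivity).
  rewrite (Re_inner_sym (S (Sd u)) u), R1.
  fold (nsq u) (nsq (S (Sd u))).
  assert (A1 : m * nsq u <= nsq (Sd u)).
  { rewrite <- !hn_sq. pose proof (Sd_below u). pose proof (hn_pos u).
    replace (m * (hnorm u * hnorm u)) with ((k' * hnorm u) * (k' * hnorm u)) by (unfold m; ring).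
    apply Rmult_le_compat; nra. }
  assert (A2 : nsq (S (Sd u)) <= K * K * nsq u).
  { rewrite <- !hn_sq. pose proof (S_bnd (Sd u)). pose proof (Sd_bnd u).
    pose proof (hn_pos u). pose proof (hn_pos (Sd u)). pose proof (hn_pos (S (Sd u))).
    assert (hnorm (S (Sd u)) <= K * hnorm u) by (unfold K; nra). nra. }
  pose proof beta_pos as bp.
  assert (E : beta * beta * (K * K * nsq u) = beta * (m * nsq u))
    by (unfold beta; field; unfold K; nra).
  assert (E2 : (1 - m * m / (K * K)) * nsq u = nsq u - beta * (m * nsq u))
    by (unfold beta; field; unfold K; nra).
  assert (B1 : beta * (m * nsq u) <= beta * nsq (Sd u)) by (apply Rmult_le_compat_l; lra).
  assert (B2 : beta * beta * nsq (S (Sd u)) <= beta * beta * (K * K * nsq u))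
    by (apply Rmult_le_compat_l; nra).
  rewrite E2. lra.
Qed.

Let th := sqrt (Rmax (1 - m * m / (K * K)) 0).

Lemma th_bounds : 0 <= th /\ th < 1.
Proof.
  split; [apply sqrt_pos|]. rewrite <- sqrt_1. apply sqrt_lt_1; [apply Rmax_r | lra|].
  apply Rmax_lub_lt; [|lra].
  assert (0 < m * m / (K * K)).
  { unfold m, K. apply Rdiv_lt_0_compat; repeat apply Rmult_lt_0_compat; lra. }
  lra.
Qed.

Lemma Lo_contr : forall u, hnorm (Lo u) <= th * hnorm u.
Proof.
  intros u. apply le_from_sq; [pose proof th_bounds; pose proof (hn_pos u); nra|].
  replace (th * hnorm u * (th * hnorm u)) with ((th * th) * (hnorm u * hnorm u)) by ring.
  unfold th. rewrite sqrt_sqrt by apply Rmax_r. rewrite hn_sq.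
  eapply Rle_trans; [apply Lo_contr_sq|].
  apply Rmult_le_compat_r; [apply nsq_pos | apply Rmax_l].
Qed.

(* S S' is onto: z = S S' l where l is the fixed point of v |-> L v + beta z. *)
Lemma SSd_onto : forall z, exists l, S (Sd l) = z.
Proof.
  intros z. set (F v := vadd (Lo v) (vscal (RtoC beta) z)).
  destruct (contraction_fixed_point F th (proj1 th_bounds) (proj2 th_bounds)) as [l hl].
  { intros u w. unfold F. rewrite vsub_addc, <- lin_sub by apply Lo_lin. apply Lo_contr. }
  exists l. unfold F, Lo in hl. rewrite <- vadd_assoc in hl.
  apply (fun e => vadd_cancel_l _ vzero l (eq_trans e (eq_sym (vadd_0 l)))) in hl.
  apply opp_unique in hl. rewrite vopp_scal in hl.
  pose proof beta_pos.
  assert (E1 : forall a (x : H), Re a = 1 -> Im a = 0 -> vscal a x = x).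
  { intros [r i] x h1 h2. simpl in h1, h2. subst. exact (vscal_1 x). }
  transitivity (vscal (RtoC (1 / beta)) (vscal (RtoC beta) z)).
  - rewrite hl, vscal_assoc. symmetry. apply E1; simpl; field; lra.
  - rewrite vscal_assoc. apply E1; simpl; field; lra.
Qed.

Lemma adjoint_pair_invertible : bounded_below S ->
  exists B : H -> H, bounded_op H B /\ (forall x, B (S x) = x) /\ (forall x, S (B x) = x).
Proof.
  intros [k [hk S_below]].
  assert (S_inj : forall u w, S u = S w -> u = w).
  { intros u w E. apply vsub_eq0, hn_zero.
    pose proof (S_below (vsub u w)). rewrite lin_sub, E, vsub_vv, hn_vzero in H0 by auto.
    pose proof (hn_pos (vsub u w)). nra. }
  assert (S_onto : forall z, exists x, S x = z).
  { intros z. destruct (SSd_onto z) as [l hl]. exists (Sd l). exact hl. }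
  destruct (functional_choice _ S_onto) as [B hB].
  exists B. split; [|split].
  - split; [split|].
    + intros x y. apply S_inj. rewrite (proj1 S_lin), !hB. reflexivity.
    + intros a x. apply S_inj. rewrite (proj2 S_lin), !hB. reflexivity.
    + exists (/ k). intros x. pose proof (S_below (B x)) as e. rewrite hB in e.
      apply Rmult_le_reg_l with k; auto.
      replace (k * (/ k * hnorm x)) with (hnorm x) by (field; lra). exact e.
  - intros x. apply S_inj, hB.
  - exact hB.
Qed.

End AdjointPairInverse.

Lemma nonneg_op_norm_sq (P : H -> H) (p : R) : linear_op H P ->
  (forall x y, inner (P x) y = inner x (P y)) -> nonneg_op H P -> 0 < p ->
  (forall x, hnorm (P x) <= p * hnorm x) ->
  forall x, nsq (P x) <= p * Re (inner (P x) x).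
Proof.
  intros [l1 l2] P_sa P_nonneg hp P_bnd x. set (y := P x).
  destruct (P_nonneg (vadd x (vscal (RtoC (- / p)) y))) as [_ P0].
  rewrite l1, l2, re_expand in P0.
  assert (R1 : Re (inner (P x) y) = nsq y) by reflexivity.
  assert (R2 : Re (inner (P y) x) = nsq y) by (rewrite P_sa, Re_inner_sym; reflexivity).
  assert (R3 : Re (inner (P y) y) <= p * nsq y).
  { eapply Rle_trans; [apply Rle_abs|]. eapply Rle_trans; [apply CS_re|].
    rewrite <- hn_sq. pose proof (P_bnd y). pose proof (hn_pos y). nra. }
  rewrite R1, R2 in P0.
  assert (hi : 0 < / p) by (apply Rinv_0_lt_compat; auto).
  assert (Q : - / p * - / p * Re (inner (P y) y) <= / p * nsq y).
  { replace (- / p * - / p) with (/ p * / p) by ring.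
    replace (/ p * nsq y) with (/ p * / p * (p * nsq y)) by (field; lra).
    apply Rmult_le_compat_l; nra. }
  apply Rmult_le_reg_l with (/ p); [exact hi|].
  replace (/ p * (p * Re (inner y x))) with (Re (inner (P x) x)) by (unfold y; field; lra).
  lra.
Qed.

Section Model.
Variables G A : H -> H.
Hypothesis hG : selfadjoint H G.
Hypothesis hA : selfadjoint H A.
Hypothesis hpos : nonneg_op H (fun x => G (A (G x))).
Variables c a : R.
Hypothesis hc : 0 < c.
Hypothesis ha : 0 < a.
Hypothesis hcb : forall x, hnorm (G x) <= c * hnorm x.
Hypothesis hab : forall x, hnorm (A x) <= a * hnorm x.

Definition Top (x : H) : H := A (G x).
Definition Pop (x : H) : H := G (A (G x)).
Definition Sl (lam : Cplx) (x : H) : H := vsub (Top x) (vscal lam x).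
Definition Sdl (lam : Cplx) (y : H) : H := vsub (G (A y)) (vscal (Cconj lam) y).

Lemma G_lin : linear_op H G. Proof. exact (proj1 (proj1 hG)). Qed.
Lemma A_lin : linear_op H A. Proof. exact (proj1 (proj1 hA)). Qed.
Lemma G_sa : forall x y, inner (G x) y = inner x (G y). Proof. exact (proj2 hG). Qed.
Lemma A_sa : forall x y, inner (A x) y = inner x (A y). Proof. exact (proj2 hA). Qed.

Lemma Top_lin : linear_op H Top.
Proof. apply (lin_comp A G); [apply A_lin | apply G_lin]. Qed.

Lemma Sl_lin : forall lam, linear_op H (Sl lam).
Proof. intros. apply (lin_subf Top (vscal lam)); [apply Top_lin | apply lin_vscal]. Qed.

Lemma Sdl_lin : forall lam, linear_op H (Sdl lam).
Proof.
  intros. apply (lin_subf (fun y => G (A y)) (vscal _)); [|apply lin_vscal].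
  apply lin_comp; [apply G_lin | apply A_lin].
Qed.

Lemma Top_bnd : forall x, hnorm (Top x) <= a * c * hnorm x.
Proof.
  intros. unfold Top. eapply Rle_trans; [apply hab|]. rewrite Rmult_assoc.
  apply Rmult_le_compat_l; [lra | apply hcb].
Qed.

Lemma Sl_bnd : forall lam x, hnorm (Sl lam x) <= (a * c + Cabs lam) * hnorm x.
Proof.
  intros. unfold Sl. eapply Rle_trans; [apply hn_sub_le|]. rewrite hn_scal.
  pose proof (Top_bnd x). lra.
Qed.

Lemma Sdl_bnd : forall lam x, hnorm (Sdl lam x) <= (a * c + Cabs lam) * hnorm x.
Proof.
  intros. unfold Sdl. eapply Rle_trans; [apply hn_sub_le|]. rewrite hn_scal, Cabs_conj.
  assert (hnorm (G (A x)) <= a * c * hnorm x).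
  { eapply Rle_trans; [apply hcb|].
    replace (a * c * hnorm x) with (c * (a * hnorm x)) by ring.
    apply Rmult_le_compat_l; [lra | apply hab]. }
  lra.
Qed.

Lemma Sl_adj : forall lam x y, inner (Sl lam x) y = inner x (Sdl lam y).
Proof.
  intros. unfold Sl, Sdl, Top.
  assert (E : inner (A (G x)) y = inner x (G (A y))) by (rewrite A_sa, G_sa; reflexivity).
  destruct (inner_sub_l (A (G x)) (vscal lam x) y) as [l1 l2].
  destruct (inner_sub_r (G (A y)) (vscal (Cconj lam) y) x) as [r1 r2].
  apply Ceq; [rewrite l1, r1 | rewrite l2, r2];
    rewrite E, inner_scal_l, inner_scal_r; simpl; ring.
Qed.

Lemma Pop_norm_sq : forall x, nsq (Pop x) <= c * a * c * Re (inner (Pop x) x).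
Proof.
  apply (nonneg_op_norm_sq Pop).
  - exact (lin_comp G Top G_lin Top_lin).
  - intros. unfold Pop. rewrite G_sa, A_sa, G_sa. reflexivity.
  - exact hpos.
  - repeat apply Rmult_lt_0_compat; lra.
  - intros x. unfold Pop. eapply Rle_trans; [apply hcb|]. rewrite !Rmult_assoc.
    apply Rmult_le_compat_l; [lra|]. rewrite <- Rmult_assoc. apply Top_bnd.
Qed.

(* First estimate: |lam|^2 |x| <= a |P x| + (ac + |lam|) |S_lam x|, obtained
   from lam x = T x - S_lam x and lam G x = P x - G S_lam x. *)
Lemma lam_x_bound : forall lam x, Cabs lam * hnorm x <= a * hnorm (G x) + hnorm (Sl lam x).
Proof.
  intros. rewrite <- hn_scal. eapply Rle_trans; [apply (hn_tri2 _ (Top x))|].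
  rewrite hn_sub_sym. fold (Sl lam x). unfold Top. pose proof (hab (G x)). lra.
Qed.

Lemma G_Sl : forall lam x, G (Sl lam x) = vsub (Pop x) (vscal lam (G x)).
Proof. intros. unfold Sl. rewrite lin_sub, (proj2 G_lin) by apply G_lin. reflexivity. Qed.

Lemma lam_Gx_bound : forall lam x,
  Cabs lam * hnorm (G x) <= hnorm (Pop x) + c * hnorm (Sl lam x).
Proof.
  intros. rewrite <- hn_scal. eapply Rle_trans; [apply (hn_tri2 _ (Pop x))|].
  rewrite hn_sub_sym, <- G_Sl. pose proof (hcb (Sl lam x)). lra.
Qed.

Lemma lam_sq_bound : forall lam x,
  Cabs lam * Cabs lam * hnorm x <= a * hnorm (Pop x) + (a * c + Cabs lam) * hnorm (Sl lam x).
Proof.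
  intros lam x. pose proof (lam_x_bound lam x). pose proof (lam_Gx_bound lam x).
  pose proof (Cabs_pos lam). pose proof (hn_pos x). pose proof (hn_pos (G x)). nra.
Qed.

Lemma form_coercive : forall lam, 0 < Cabs lam -> exists delta kappa, 0 < delta /\ 0 < kappa /\
  forall x, hnorm x = 1 -> hnorm (Sl lam x) <= delta -> kappa <= Re (inner (Pop x) x).
Proof.
  intros lam hL. set (L := Cabs lam) in *. set (p := c * a * c).
  assert (hp : 0 < p) by (unfold p; repeat apply Rmult_lt_0_compat; lra).
  set (b := L * L / (2 * a)).
  assert (hb : 0 < b) by (unfold b; apply Rdiv_lt_0_compat; nra).
  exists (L * L / (2 * (a * c + L))), (b * b / p). split; [|split].
  - apply Rdiv_lt_0_compat; nra.
  - apply Rdiv_lt_0_compat; nra.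
  - intros x hx hd.
    pose proof (lam_sq_bound lam x) as e. fold L in e. rewrite hx, Rmult_1_r in e.
    assert (hSd : (a * c + L) * hnorm (Sl lam x) <= L * L / 2).
    { apply Rle_trans with ((a * c + L) * (L * L / (2 * (a * c + L)))).
      - apply Rmult_le_compat_l; nra.
      - right. field. nra. }
    assert (hab2 : a * b = L * L / 2) by (unfold b; field; lra).
    assert (hP : b <= hnorm (Pop x)) by nra.
    assert (hP2 : b * b <= nsq (Pop x)) by (rewrite <- hn_sq; nra).
    pose proof (Pop_norm_sq x) as hn. fold p in hn.
    apply Rmult_le_reg_l with p; [exact hp|].
    replace (p * (b * b / p)) with (b * b) by (field; lra). lra.
Qed.

Lemma form_split : forall lam x,
  Re (inner (Pop x) x) = Re (inner (G (Sl lam x)) x) + Re lam * Re (inner (G x) x) /\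
  Im (inner (G (Sl lam x)) x) + Im lam * Re (inner (G x) x) = 0.
Proof.
  intros lam x.
  assert (E : Pop x = vadd (G (Sl lam x)) (vscal lam (G x))) by (rewrite G_Sl, vsub_add; reflexivity).
  assert (hGx : Im (inner (G x) x) = 0).
  { pose proof (f_equal Im (inner_conj x (G x))). rewrite <- G_sa in H0. simpl in H0. lra. }
  destruct (hpos x) as [hi _]. fold (Pop x) in hi.
  rewrite E, inner_add_l, inner_scal_l in hi |- *. simpl in hi |- *. rewrite hGx in hi |- *.
  split; lra.
Qed.

Lemma G_form_bound : forall y x,
  Rabs (Re (inner (G y) x)) <= c * hnorm y * hnorm x /\
  Rabs (Im (inner (G y) x)) <= c * hnorm y * hnorm x.
Proof.
  intros y x.
  assert (hnorm (G y) * hnorm x <= c * hnorm y * hnorm x)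
    by (apply Rmult_le_compat_r; [apply hn_pos | apply hcb]).
  pose proof (CS_re (G y) x). pose proof (CS_im (G y) x). split; lra.
Qed.

Lemma nonreal_bounded_below : forall lam, Im lam <> 0 -> bounded_below (Sl lam).
Proof.
  intros lam hIm.
  destruct (form_coercive lam (Cabs_pos_nonreal lam hIm)) as [delta [kappa [hdl [hkp hco]]]].
  assert (hB : 0 < Rabs (Im lam)) by (apply Rabs_pos_lt; auto).
  set (q := Rabs (Re lam) / Rabs (Im lam)).
  assert (hq : 0 <= q) by (unfold q; apply Rmult_le_pos; [apply Rabs_pos | left; apply Rinv_0_lt_compat; exact hB]).
  set (K1 := c * (1 + q)).
  assert (hK1 : 0 < K1) by (unfold K1; nra).
  apply (bounded_below_of_units (Sl lam) (Rmin delta (kappa / K1))); [apply Sl_lin| |].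
  { apply Rmin_glb_lt; [lra | apply Rdiv_lt_0_compat; lra]. }
  intros x hx. set (d := hnorm (Sl lam x)).
  destruct (Rle_lt_dec d delta) as [hd | hd]; [|pose proof (Rmin_l delta (kappa / K1)); lra].
  apply Rle_trans with (kappa / K1); [apply Rmin_r|].
  pose proof (hco x hx hd) as hk.
  destruct (form_split lam x) as [eRe eIm].
  destruct (G_form_bound (Sl lam x) x) as [bRe bIm]. rewrite hx, Rmult_1_r in bRe, bIm.
  fold d in bRe, bIm. set (g := Re (inner (G x) x)) in *.
  assert (hg : Rabs (Im lam) * Rabs g <= c * d).
  { rewrite <- Rabs_mult. replace (Im lam * g) with (- Im (inner (G (Sl lam x)) x)) by lra.
    rewrite Rabs_Ropp. exact bIm. }
  assert (hReg : Re lam * g <= c * q * d).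
  { eapply Rle_trans; [apply Rle_abs|]. rewrite Rabs_mult.
    apply Rmult_le_reg_l with (Rabs (Im lam)); [exact hB|].
    replace (Rabs (Im lam) * (c * q * d)) with (Rabs (Re lam) * (c * d)) by (unfold q; field; lra).
    pose proof (Rabs_pos (Re lam)). nra. }
  pose proof (Rle_abs (Re (inner (G (Sl lam x)) x))).
  apply Rmult_le_reg_l with K1; [exact hK1|].
  replace (K1 * (kappa / K1)) with kappa by (field; lra). unfold K1. lra.
Qed.

Lemma real_form_sign : forall r, r <> 0 -> exists delta kappa, 0 < delta /\ 0 < kappa /\
  forall x, hnorm x = 1 -> hnorm (Sl (RtoC r) x) <= delta -> kappa <= r * Re (inner (G x) x).
Proof.
  intros r hr.
  assert (hL : 0 < Cabs (RtoC r)) by (rewrite Cabs_RtoC; apply Rabs_pos_lt; exact hr).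
  destruct (form_coercive _ hL) as [delta [kappa [hdl [hkp hco]]]].
  exists (Rmin delta (kappa / (2 * c))), (kappa / 2). split; [|split].
  - apply Rmin_glb_lt; [lra | apply Rdiv_lt_0_compat; lra].
  - lra.
  - intros x hx hd.
    pose proof (hco x hx (Rle_trans _ _ _ hd (Rmin_l _ _))) as hk.
    pose proof (Rle_trans _ _ _ hd (Rmin_r _ _)) as hd2.
    destruct (form_split (RtoC r) x) as [eRe _]. change (Re (RtoC r)) with r in eRe.
    destruct (G_form_bound (Sl (RtoC r) x) x) as [bRe _]. rewrite hx, Rmult_1_r in bRe.
    pose proof (Rle_abs (Re (inner (G (Sl (RtoC r) x)) x))).
    assert (c * hnorm (Sl (RtoC r) x) <= kappa / 2).
    { apply Rle_trans with (c * (kappa / (2 * c))); [apply Rmult_le_compat_l; lra|].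
      right; field; lra. }
    lra.
Qed.

(* A intertwines S_{conj lam} and the adjoint: S_{conj lam} A = A Sdl_lam.  Hence
   the adjoint is bounded below as soon as S_{conj lam} is (for lam <> 0). *)
Lemma Sl_A : forall lam y, Sl (Cconj lam) (A y) = A (Sdl lam y).
Proof.
  intros. unfold Sl, Sdl, Top. rewrite lin_sub, (proj2 A_lin) by apply A_lin. reflexivity.
Qed.

Lemma adjoint_bounded_below : forall lam, 0 < Cabs lam ->
  bounded_below (Sl (Cconj lam)) -> bounded_below (Sdl lam).
Proof.
  intros lam hL [k [hk hb]].
  exists (k * Cabs lam / (k + c * a)). split; [apply Rdiv_lt_0_compat; nra|].
  intros y. set (d := hnorm (Sdl lam y)).
  assert (e1 : Cabs lam * hnorm y <= d + c * hnorm (A y)).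
  { rewrite <- (Cabs_conj lam), <- hn_scal.
    eapply Rle_trans; [apply (hn_tri2 _ (G (A y)))|]. rewrite hn_sub_sym.
    fold (Sdl lam y) d. pose proof (hcb (A y)). lra. }
  assert (e2 : k * hnorm (A y) <= a * d).
  { eapply Rle_trans; [apply hb|]. rewrite Sl_A. apply hab. }
  pose proof (hn_pos y). pose proof (hn_pos (A y)).
  apply Rmult_le_reg_l with (k + c * a); [nra|].
  replace ((k + c * a) * (k * Cabs lam / (k + c * a) * hnorm y)) with (k * (Cabs lam * hnorm y))
    by (field; nra).
  nra.
Qed.

Lemma not_spectrum : forall lam, 0 < Cabs lam ->
  bounded_below (Sl lam) -> bounded_below (Sl (Cconj lam)) -> ~ spectrum H Top lam.
Proof.
  intros lam hL hb hbc hs. apply hs.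
  destruct (adjoint_bounded_below lam hL hbc) as [k' [hk' hbd]].
  assert (hM : 0 < a * c + Cabs lam) by nra.
  exact (adjoint_pair_invertible (Sl lam) (Sdl lam) (Sl_lin lam) (Sdl_lin lam) (Sl_adj lam)
           _ hM (Sl_bnd lam) (Sdl_bnd lam) k' hk' hbd hb).
Qed.

Lemma spectrum_real : forall lam, spectrum H Top lam -> Im lam = 0.
Proof.
  intros lam hs. apply NNPP. intros hIm. apply (not_spectrum lam); auto.
  - apply Cabs_pos_nonreal; auto.
  - apply nonreal_bounded_below; auto.
  - apply nonreal_bounded_below. simpl. lra.
Qed.

Lemma spectrum_sigma_ap : forall r, r <> 0 -> spectrum H Top (RtoC r) -> sigma_ap H Top (RtoC r).
Proof.
  intros r hr hs. apply NNPP. intros hn.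
  assert (hb : bounded_below (Sl (RtoC r))) by (apply bounded_below_of_no_approx; [apply Sl_lin | exact hn]).
  apply (not_spectrum (RtoC r)); [rewrite Cabs_RtoC; apply Rabs_pos_lt; exact hr | exact hb | | exact hs].
  rewrite Cconj_RtoC. exact hb.
Qed.

Lemma approx_seq_form_sign : forall r, r <> 0 -> exists kappa, 0 < kappa /\
  forall x, approx_seq H Top (RtoC r) x ->
  exists N : nat, forall n : nat, (n >= N)%nat -> kappa <= r * Re (inner (G (x n)) (x n)).
Proof.
  intros r hr. destruct (real_form_sign r hr) as [delta [kappa [hdl [hkp hk]]]].
  exists kappa. split; [exact hkp|]. intros x [hx hcv].
  destruct (hcv delta hdl) as [N hN]. exists N. intros n hn.
  apply hk; [apply hx|]. specialize (hN n hn). unfold R_dist in hN. rewrite Rminus_0_r in hN.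
  left. eapply Rle_lt_trans; [apply Rle_abs | exact hN].
Qed.

Lemma spectrum_pos_sigma_pp : forall r, 0 < r ->
  spectrum H Top (RtoC r) -> sigma_pp H G Top (RtoC r).
Proof.
  intros r hr hs. split; [apply spectrum_sigma_ap; [lra | exact hs]|].
  destruct (approx_seq_form_sign r ltac:(lra)) as [kappa [hkp hk]].
  intros x hx. exists (kappa / r). split; [apply Rdiv_lt_0_compat; lra|].
  destruct (hk x hx) as [N hN]. exists N. intros n hn. specialize (hN n hn).
  apply Rle_ge, Rmult_le_reg_l with r; [lra|].
  replace (r * (kappa / r)) with kappa by (field; lra). exact hN.
Qed.

Lemma spectrum_neg_sigma_mm : forall r, r < 0 ->
  spectrum H Top (RtoC r) -> sigma_mm H G Top (RtoC r).
Proof.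
  intros r hr hs. split; [apply spectrum_sigma_ap; [lra | exact hs]|].
  destruct (approx_seq_form_sign r ltac:(lra)) as [kappa [hkp hk]].
  intros x hx. exists (kappa / - r). split; [apply Rdiv_lt_0_compat; lra|].
  destruct (hk x hx) as [N hN]. exists N. intros n hn. specialize (hN n hn).
  apply Rmult_le_reg_l with (- r); [lra|].
  replace (- r * - (kappa / - r)) with (- kappa) by (field; lra). lra.
Qed.

End Model.

End Hilbert.

Theorem propositionp (H : HilbertSpace) (G0 A0 : H -> H)
  (hG : selfadjoint H G0) (hA : selfadjoint H A0)
  (hpos : nonneg_op H (fun x => G0 (A0 (G0 x)))) :
  let T := fun x => A0 (G0 x) in
  (bounded_op H T /\ Gsymmetric H G0 T) /\
  (forall lam : Cplx, spectrum H T lam -> Im lam = 0) /\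
  (forall r : R, 0 < r -> spectrum H T (RtoC r) -> sigma_pp H G0 T (RtoC r)) /\
  (forall r : R, r < 0 -> spectrum H T (RtoC r) -> sigma_mm H G0 T (RtoC r)).
Proof.
  intros T.
  destruct (bnd_pos H G0 (proj1 hG)) as [c [hc hcb]].
  destruct (bnd_pos H A0 (proj1 hA)) as [a [ha hab]].
  split; [split|split; [|split]].
  - split; [exact (Top_lin H G0 A0 hG hA) | exists (a * c); exact (Top_bnd H G0 A0 c a ha hcb hab)].
  - intros x y. unfold T. rewrite (proj2 hG), (proj2 hA). reflexivity.
  - exact (spectrum_real H G0 A0 hG hA hpos c a hc ha hcb hab).
  - exact (spectrum_pos_sigma_pp H G0 A0 hG hA hpos c a hc ha hcb hab).
  - exact (spectrum_neg_sigma_mm H G0 A0 hG hA hpos c a hc ha hcb hab).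
Qed.
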